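(* Let $\xi_m>0$, $\lambda>0$, $0\le\mu\le\xi_m$ and $T>0$. The equation $$\frac{\xi_m}{\lambda}=2T\ln\frac{\cosh(\sqrt{\xi_m^2+\Delta^2}/2T)}{\cosh(\sqrt{\mu^2+\Delta^2}/2T)}+\mu\int_0^{\mu}\tanh\Big(\frac{\sqrt{\xi^2+\Delta^2}}{2T}\Big)\frac{d\xi}{\sqrt{\xi^2+\Delta^2}}$$ has a positive solution $\Delta$ if and only if $$\frac{\xi_m}{\lambda}<2T\ln\frac{\cosh(\xi_m/2T)}{\cosh(\mu/2T)}+\mu\int_0^{\mu}\tanh\Big(\frac{\xi}{2T}\Big)\frac{d\xi}{\xi},$$ and if a positive solution exists it is unique. *)

From Stdlib Require Import Reals Lra ClassicalEpsilon.
Open Scope R_scope.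

(* Riemann integral of f over [a,b], defined as the value of RiemannInt
   whenever f is Riemann integrable on [a,b] (the value is independent of the
   integrability proof, by RiemannInt_P5); 0 otherwise (never used here,
   since all integrands below are Riemann integrable). *)
Definition Rint (f : R -> R) (a b : R) : R :=
  epsilon (inhabits 0)
    (fun l => exists pr : Riemann_integrable f a b, RiemannInt pr = l).

Definition gapRHS (xim mu T D : R) : R :=
  2 * T * ln (cosh (sqrt (xim ^ 2 + D ^ 2) / (2 * T))
              / cosh (sqrt (mu ^ 2 + D ^ 2) / (2 * T)))
  + mu * Rint (fun xi => tanh (sqrt (xi ^ 2 + D ^ 2) / (2 * T))
                          / sqrt (xi ^ 2 + D ^ 2)) 0 mu.

(* The threshold quantity (Delta = 0 version, with integrand tanh(xi/2T)/xi;
   its value at the single point xi = 0 does not affect the integral). *)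
Definition gapThreshold (xim mu T : R) : R :=
  2 * T * ln (cosh (xim / (2 * T)) / cosh (mu / (2 * T)))
  + mu * Rint (fun xi => tanh (xi / (2 * T)) / xi) 0 mu.

From Coquelicot Require Import Coquelicot.
From Stdlib Require Import Reals Lra Lia ClassicalEpsilon.
Open Scope R_scope.

(* With c = 2T, write G(Δ) for the right-hand side of the gap equation, where the
   kernel k(E) = tanh(E/c)/E is extended continuously by k(0) = 1/c.  Then G is
   continuous on R and G(0) is the threshold.  Since tanh y / y decreases on (0,∞),
   the integrand k(√(ξ²+Δ²)) decreases in Δ, and so does the logarithmic term, whose
   Δ-derivative is (Δ/c)(k(E_m) - k(E_μ)) with E_μ ≤ E_m; hence G decreases strictly
   on (0,∞).  Finally G(Δ) ≤ (ξ_m² + μ²)/Δ, because ln cosh is 1-Lipschitz and k(E) ≤ 1/E.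
   The intermediate value theorem and strict monotonicity give existence iff
   ξ_m/λ < G(0), and uniqueness. *)

Lemma mean_value_interior (f df : R -> R) a b : a < b ->
  (forall x, a <= x <= b -> is_derive f x (df x)) ->
  exists x, a < x < b /\ f b - f a = df x * (b - a).
Proof.
  intros Hab Hd. destruct (MVT_cor2 f df a b Hab) as [x [Heq Hx]].
  - intros x Hx. apply is_derive_Reals, Hd, Hx.
  - exists x. split; assumption.
Qed.

Lemma le_of_continuity_pt_right (f : R -> R) a b : a < b -> continuity_pt f a ->
  (forall x, a < x < b -> f b <= f x) -> f b <= f a.
Proof.
  intros Hab Hf Hle.
  apply (filterlim_le (F := at_right a) (fun _ => f b) f (f b) (f a)).
  - exists (mkposreal _ (proj2 (Rlt_0_minus _ _) Hab)). intros x Hx Hax.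
    apply Hle. split; [exact Hax|]. apply Rabs_lt_between' in Hx. simpl in Hx. lra.
  - apply filterlim_const.
  - apply (filterlim_filter_le_1 (F := locally a)); [apply filter_le_within|].
    apply continuity_pt_filterlim, Hf.
Qed.

Lemma continuity_pt_RInt_param (f : R -> R -> R) a b y0 : a <= b ->
  (forall x, a <= x <= b -> continuity_2d_pt f x y0) ->
  (forall y, ex_RInt (fun x => f x y) a b) ->
  continuity_pt (fun y => RInt (fun x => f x y) a b) y0.
Proof.
  intros Hab Hf Hex eps Heps.
  assert (Heps' : 0 < eps / (b - a + 1)) by (apply Rdiv_lt_0_compat; lra).
  destruct (uniform_continuity_2d_1d f a b y0 Hf (mkposreal _ Heps')) as [del Hdel].
  exists del. split; [apply cond_pos|]. intros y [_ Hy]. simpl in *. unfold R_dist in *.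
  rewrite <- (RInt_minus (fun x => f x y) (fun x => f x y0)) by apply Hex.
  eapply Rle_lt_trans.
  { apply abs_RInt_le_const with (M := eps / (b - a + 1)); [lra| |].
    - apply (ex_RInt_minus (V := R_NormedModule)); apply Hex.
    - intros x Hx. left. apply Rabs_lt_between' in Hy.
      apply (Hdel x y0 x y); try lra. rewrite Rminus_diag, Rabs_R0. apply cond_pos. }
  apply (Rmult_lt_reg_r (b - a + 1)); [lra|].
  replace ((b - a) * (eps / (b - a + 1)) * (b - a + 1)) with ((b - a) * eps) by (field; lra).
  nra.
Qed.

Lemma cosh_pos x : 0 < cosh x.
Proof. unfold cosh. pose proof (exp_pos x); pose proof (exp_pos (-x)); lra. Qed.

Lemma sinh_lt_cosh x : sinh x < cosh x.
Proof. unfold sinh, cosh. pose proof (exp_pos (-x)); lra. Qed.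

Lemma sinh_pos y : 0 < y -> 0 < sinh y.
Proof. intros Hy. rewrite <- sinh_0. apply sinh_lt, Hy. Qed.

Lemma tanh_lt_1 x : tanh x < 1.
Proof.
  unfold tanh. pose proof (cosh_pos x). apply (Rmult_lt_reg_r (cosh x)); [lra|].
  unfold Rdiv. rewrite Rmult_assoc, Rinv_l, Rmult_1_r, Rmult_1_l by lra. apply sinh_lt_cosh.
Qed.

Lemma tanh_pos y : 0 < y -> 0 < tanh y.
Proof. intros Hy. apply Rdiv_lt_0_compat; [apply sinh_pos, Hy | apply cosh_pos]. Qed.

Lemma lt_sinh_mul_cosh y : 0 < y -> y < sinh y * cosh y.
Proof.
  intros Hy.
  destruct (mean_value_interior (fun t => sinh t * cosh t - t) (fun t => 2 * sinh t ^ 2) 0 y Hy)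
    as [t [Ht Heq]].
  - intros t _. unfold sinh, cosh. auto_derive; [exact I|].
    rewrite !exp_Ropp. pose proof (exp_pos t). field. lra.
  - rewrite sinh_0, Rmult_0_l in Heq. pose proof (sinh_pos t (proj1 Ht)).
    assert (0 < 2 * sinh t ^ 2 * (y - 0)) by (apply Rmult_lt_0_compat; nra). lra.
Qed.

Lemma tanh_div_decreasing a b : 0 < a -> a < b -> tanh b / b < tanh a / a.
Proof.
  intros Ha Hab.
  destruct (mean_value_interior (fun t => tanh t / t)
              (fun t => (t - sinh t * cosh t) / (t ^ 2 * cosh t ^ 2)) a b Hab) as [t [Ht Heq]].
  - intros t Ht. unfold tanh, sinh, cosh.
    pose proof (exp_pos t); pose proof (exp_pos (-t)).
    auto_derive; [repeat split; lra|].
    rewrite !exp_Ropp in *. field. split; [lra|]. split; intro; nra.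
  - assert (Hneg : (t - sinh t * cosh t) / (t ^ 2 * cosh t ^ 2) < 0).
    { pose proof (lt_sinh_mul_cosh t ltac:(lra)). pose proof (cosh_pos t).
      apply Rdiv_neg_pos; [lra|]. apply Rmult_lt_0_compat; apply pow_lt; lra. }
    nra.
Qed.

Lemma ln_cosh_sub_le a b : 0 <= b <= a -> ln (cosh a) - ln (cosh b) <= a - b.
Proof.
  intros [Hb Hba]. destruct (Req_dec b a) as [->|Hne]; [lra|].
  destruct (mean_value_interior (fun u => ln (cosh u)) tanh b a ltac:(lra)) as [u [_ Heq]].
  - intros u _. unfold tanh, cosh, sinh. pose proof (exp_pos u); pose proof (exp_pos (-u)).
    auto_derive; [lra|]. field. lra.
  - pose proof (tanh_lt_1 u). nra.
Qed.

Definition sinhc (y : R) : R := if Req_EM_T y 0 then 1 else sinh y / y.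

Lemma continuity_sinhc y : continuity_pt sinhc y.
Proof.
  destruct (Req_dec y 0) as [->|Hy].
  - intros eps Heps. destruct (derivable_pt_lim_sinh 0 eps Heps) as [del Hdel].
    exists del. split; [apply cond_pos|]. intros x [[_ Hx0] Hx]. simpl in *. unfold R_dist in *.
    unfold sinhc. destruct (Req_EM_T x 0) as [e|_]; [congruence|].
    destruct (Req_EM_T 0 0) as [_|n]; [|congruence].
    rewrite Rminus_0_r in Hx. specialize (Hdel x (not_eq_sym Hx0) Hx).
    rewrite Rplus_0_l, sinh_0, Rminus_0_r, cosh_0 in Hdel. exact Hdel.
  - apply continuity_pt_filterlim.
    apply (continuous_ext_loc _ (fun t => sinh t / t)).
    + exists (mkposreal _ (Rabs_pos_lt y Hy)). intros z Hz. simpl in Hz.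
      change (Rabs (z - y) < Rabs y) in Hz.
      unfold sinhc. destruct (Req_EM_T z 0) as [->|_]; [|reflexivity].
      rewrite Rminus_0_l, Rabs_Ropp in Hz. lra.
    + apply continuity_pt_filterlim.
      apply (continuity_pt_div sinh (fun t => t)); [| apply continuity_pt_id | exact Hy].
      apply derivable_continuous_pt, derivable_pt_sinh.
Qed.

Definition tanhc (y : R) : R := sinhc y / cosh y.

Lemma tanhc_eq y : y <> 0 -> tanhc y = tanh y / y.
Proof.
  intros Hy. unfold tanhc, sinhc, tanh. destruct (Req_EM_T y 0) as [e|_]; [contradiction|].
  pose proof (cosh_pos y). field. split; lra.
Qed.

Lemma continuity_tanhc y : continuity_pt tanhc y.
Proof.
  apply continuity_pt_div; [apply continuity_sinhc | | apply Rgt_not_eq, cosh_pos].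
  apply derivable_continuous_pt, derivable_pt_cosh.
Qed.

Section GapFunction.

Variable c : R.
Hypothesis c_pos : 0 < c.

Definition kernel (E : R) : R := tanhc (E / c) / c.

Lemma kernel_eq E : E <> 0 -> kernel E = tanh (E / c) / E.
Proof.
  intros HE. unfold kernel. rewrite tanhc_eq.
  - field. split; lra.
  - intro H. apply HE. apply (Rmult_eq_reg_r (/ c)); [lra | apply Rinv_neq_0_compat; lra].
Qed.

Lemma continuity_kernel E : continuity_pt kernel E.
Proof.
  apply continuity_pt_filterlim. unfold kernel.
  apply (continuous_comp (fun E => tanhc (E / c)) (fun t => t / c)).
  - apply (continuous_comp (fun E => E / c) tanhc).
    + apply (continuous_scal_l (K := R_AbsRing) (V := R_NormedModule) (fun E => E) (/ c)),
        continuous_id.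
    + apply continuity_pt_filterlim, continuity_tanhc.
  - apply (continuous_scal_l (K := R_AbsRing) (V := R_NormedModule) (fun t => t) (/ c)),
      continuous_id.
Qed.

Lemma kernel_decreasing E1 E2 : 0 < E1 -> E1 < E2 -> kernel E2 < kernel E1.
Proof.
  intros H1 H12. rewrite !kernel_eq by lra.
  assert (Hc' : 0 < / c) by (apply Rinv_0_lt_compat, c_pos).
  pose proof (tanh_div_decreasing (E1 / c) (E2 / c)) as H.
  replace (tanh (E2 / c) / E2) with (tanh (E2 / c) / (E2 / c) / c) by (field; lra).
  replace (tanh (E1 / c) / E1) with (tanh (E1 / c) / (E1 / c) / c) by (field; lra).
  apply Rmult_lt_compat_r; [exact Hc'|]. apply H; unfold Rdiv; nra.
Qed.

Lemma kernel_bounds E : 0 < E -> 0 < kernel E <= / E.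
Proof.
  intros HE. rewrite kernel_eq by lra.
  assert (Hy : 0 < E / c) by (apply Rdiv_lt_0_compat; lra).
  pose proof (tanh_pos _ Hy). pose proof (tanh_lt_1 (E / c)).
  split; [apply Rdiv_lt_0_compat; lra|].
  unfold Rdiv. rewrite <- (Rmult_1_l (/ E)) at 2.
  apply Rmult_le_compat_r; [left; apply Rinv_0_lt_compat|]; lra.
Qed.

Definition log_cosh_energy (X d : R) : R := ln (cosh (sqrt (X + d ^ 2) / c)).

Lemma is_derive_log_cosh_energy X d : 0 <= X -> 0 < d ->
  is_derive (log_cosh_energy X) d (d * kernel (sqrt (X + d ^ 2)) / c).
Proof.
  intros HX Hd. unfold log_cosh_energy, cosh.
  assert (Hs : 0 < X + d ^ 2) by nra.
  pose proof (sqrt_lt_R0 _ Hs) as HE.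
  rewrite kernel_eq by lra. unfold tanh, sinh, cosh.
  set (u := sqrt (X + d ^ 2) / c).
  pose proof (exp_pos u); pose proof (exp_pos (- u)).
  auto_derive;
    replace (X + d * (d * 1)) with (X + d ^ 2) by ring;
    change (sqrt (X + d ^ 2) * / c) with u.
  - repeat split; lra.
  - rewrite !exp_Ropp in *. field. repeat split; nra.
Qed.

Lemma continuity_log_cosh_energy X d : 0 <= X -> continuity_pt (log_cosh_energy X) d.
Proof.
  intros HX. apply continuity_pt_filterlim. unfold log_cosh_energy.
  apply (continuous_comp (fun d => cosh (sqrt (X + d ^ 2) / c)) ln);
    [| apply continuous_ln, cosh_pos].
  apply (continuous_comp (fun d => sqrt (X + d ^ 2) / c) cosh);
    [| apply continuity_pt_filterlim, derivable_continuous_pt, derivable_pt_cosh].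
  apply (continuous_comp (fun d => sqrt (X + d ^ 2)) (fun t => t / c)).
  - apply (continuous_comp (fun d => X + d ^ 2) sqrt); [| apply continuous_sqrt].
    apply (ex_derive_continuous (K := R_AbsRing) (V := R_NormedModule)). auto_derive. exact I.
  - apply (continuous_scal_l (K := R_AbsRing) (V := R_NormedModule) (fun t => t) (/ c)),
      continuous_id.
Qed.

Lemma log_cosh_energy_sub_decreasing X Y d1 d2 : 0 <= Y <= X -> 0 < d1 < d2 ->
  log_cosh_energy X d2 - log_cosh_energy Y d2 <= log_cosh_energy X d1 - log_cosh_energy Y d1
  /\ (Y < X -> log_cosh_energy X d2 - log_cosh_energy Y d2
               < log_cosh_energy X d1 - log_cosh_energy Y d1).
Proof.
  intros [HY HYX] [H1 H12].
  destruct (mean_value_interior (fun d => log_cosh_energy X d - log_cosh_energy Y d)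
    (fun d => d / c * (kernel (sqrt (X + d ^ 2)) - kernel (sqrt (Y + d ^ 2)))) d1 d2 H12)
    as [d [Hd Heq]].
  { intros d Hd. replace (d / c * (kernel (sqrt (X + d ^ 2)) - kernel (sqrt (Y + d ^ 2))))
      with (d * kernel (sqrt (X + d ^ 2)) / c - d * kernel (sqrt (Y + d ^ 2)) / c)
      by (field; lra).
    apply (is_derive_minus (log_cosh_energy X) (log_cosh_energy Y));
      apply is_derive_log_cosh_energy; lra. }
  assert (Hdc : 0 < d / c) by (apply Rdiv_lt_0_compat; lra).
  assert (HEY : 0 < sqrt (Y + d ^ 2)) by (apply sqrt_lt_R0; nra).
  assert (Hk : kernel (sqrt (X + d ^ 2)) <= kernel (sqrt (Y + d ^ 2))
               /\ (Y < X -> kernel (sqrt (X + d ^ 2)) < kernel (sqrt (Y + d ^ 2)))).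
  { destruct (Req_dec Y X) as [->|Hne]; [split; [lra | intros; lra]|].
    assert (kernel (sqrt (X + d ^ 2)) < kernel (sqrt (Y + d ^ 2)))
      by (apply kernel_decreasing; [exact HEY | apply sqrt_lt_1; nra]).
    split; [lra | intros; lra]. }
  destruct Hk as [Hle Hlt]. split.
  - assert (0 <= d / c * (kernel (sqrt (Y + d ^ 2)) - kernel (sqrt (X + d ^ 2))) * (d2 - d1))
      by (apply Rmult_le_pos; [apply Rmult_le_pos|]; lra).
    lra.
  - intros HYX'. specialize (Hlt HYX').
    assert (0 < d / c * (kernel (sqrt (Y + d ^ 2)) - kernel (sqrt (X + d ^ 2))) * (d2 - d1))
      by (apply Rmult_lt_0_compat; [apply Rmult_lt_0_compat|]; lra).
    lra.
Qed.

Lemma sqrt_add_sqr_le X D : 0 <= X -> 0 < D -> sqrt (X + D ^ 2) <= D + X / D.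
Proof.
  intros HX HD. assert (HXD : 0 <= X / D) by (apply Rdiv_le_0_compat; lra).
  rewrite <- (sqrt_pow2 (D + X / D)) by lra. apply sqrt_le_1; [nra | nra |].
  replace ((D + X / D) ^ 2) with (D ^ 2 + 2 * X + (X / D) ^ 2) by (field; lra). nra.
Qed.

Lemma log_cosh_energy_sub_le X Y D : 0 <= Y <= X -> 0 < D ->
  c * (log_cosh_energy X D - log_cosh_energy Y D) <= X / D.
Proof.
  intros [HY HYX] HD. unfold log_cosh_energy.
  assert (HEY : D <= sqrt (Y + D ^ 2)).
  { rewrite <- (sqrt_pow2 D) at 1 by lra. apply sqrt_le_1; nra. }
  assert (HEX : sqrt (Y + D ^ 2) <= sqrt (X + D ^ 2)) by (apply sqrt_le_1; nra).
  pose proof (sqrt_add_sqr_le X D ltac:(lra) HD).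
  assert (Hc' : 0 < / c) by (apply Rinv_0_lt_compat, c_pos).
  pose proof (ln_cosh_sub_le (sqrt (X + D ^ 2) / c) (sqrt (Y + D ^ 2) / c)) as Hln.
  assert (c * (ln (cosh (sqrt (X + D ^ 2) / c)) - ln (cosh (sqrt (Y + D ^ 2) / c)))
          <= c * (sqrt (X + D ^ 2) / c - sqrt (Y + D ^ 2) / c)).
  { apply Rmult_le_compat_l; [lra|]. apply Hln. unfold Rdiv. split; nra. }
  replace (c * (sqrt (X + D ^ 2) / c - sqrt (Y + D ^ 2) / c))
    with (sqrt (X + D ^ 2) - sqrt (Y + D ^ 2)) in * by (field; lra).
  lra.
Qed.

Definition kernel_integral (mu d : R) : R :=
  RInt (fun xi => kernel (sqrt (xi ^ 2 + d ^ 2))) 0 mu.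

Lemma continuity_2d_kernel_energy xi d :
  continuity_2d_pt (fun xi d => kernel (sqrt (xi ^ 2 + d ^ 2))) xi d.
Proof.
  apply (continuity_1d_2d_pt_comp kernel (fun xi d => sqrt (xi ^ 2 + d ^ 2)));
    [apply continuity_kernel|].
  apply (continuity_1d_2d_pt_comp sqrt (fun xi d => xi ^ 2 + d ^ 2));
    [apply continuity_pt_filterlim, continuous_sqrt|].
  apply (continuity_2d_pt_ext (fun xi d => xi * xi + d * d)); [intros; ring|].
  apply continuity_2d_pt_plus; apply continuity_2d_pt_mult;
    apply continuity_2d_pt_id1 || apply continuity_2d_pt_id2.
Qed.

Lemma continuous_kernel_energy d xi : continuous (fun xi => kernel (sqrt (xi ^ 2 + d ^ 2))) xi.
Proof.
  apply (continuous_comp (fun xi => sqrt (xi ^ 2 + d ^ 2)) kernel);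
    [| apply continuity_pt_filterlim, continuity_kernel].
  apply (continuous_comp (fun xi => xi ^ 2 + d ^ 2) sqrt); [| apply continuous_sqrt].
  apply (ex_derive_continuous (K := R_AbsRing) (V := R_NormedModule)). auto_derive. exact I.
Qed.

Lemma ex_RInt_kernel_energy mu d : ex_RInt (fun xi => kernel (sqrt (xi ^ 2 + d ^ 2))) 0 mu.
Proof.
  apply (ex_RInt_continuous (V := R_CompleteNormedModule)). intros xi _.
  apply continuous_kernel_energy.
Qed.

Lemma continuity_kernel_integral mu d : 0 <= mu -> continuity_pt (kernel_integral mu) d.
Proof.
  intros Hmu. apply (continuity_pt_RInt_param (fun xi d => kernel (sqrt (xi ^ 2 + d ^ 2))));
    [exact Hmu | intros; apply continuity_2d_kernel_energy | apply ex_RInt_kernel_energy].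
Qed.

Lemma kernel_integral_decreasing mu d1 d2 : 0 < mu -> 0 < d1 < d2 ->
  kernel_integral mu d2 < kernel_integral mu d1.
Proof.
  intros Hmu [H1 H12]. apply RInt_lt;
    [exact Hmu | intros; apply continuous_kernel_energy | intros; apply continuous_kernel_energy |].
  intros xi _. apply kernel_decreasing; [apply sqrt_lt_R0 | apply sqrt_lt_1]; nra.
Qed.

Lemma kernel_integral_le mu D : 0 <= mu -> 0 < D -> kernel_integral mu D <= mu / D.
Proof.
  intros Hmu HD.
  apply (Rle_trans _ (RInt (fun _ => / D) 0 mu)).
  - apply RInt_le; [exact Hmu | apply ex_RInt_kernel_energy | apply ex_RInt_const |].
    intros xi _. assert (HE : D <= sqrt (xi ^ 2 + D ^ 2)).
    { rewrite <- (sqrt_pow2 D) at 1 by lra. apply sqrt_le_1; nra. }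
    destruct (kernel_bounds (sqrt (xi ^ 2 + D ^ 2))) as [_ Hk]; [lra|].
    apply (Rle_trans _ _ _ Hk), Rinv_le_contravar; lra.
  - rewrite RInt_const. unfold scal; simpl. unfold mult; simpl. lra.
Qed.

Definition gap (xim mu d : R) : R :=
  c * (log_cosh_energy (xim ^ 2) d - log_cosh_energy (mu ^ 2) d) + mu * kernel_integral mu d.

Variables xim mu : R.
Hypothesis xim_pos : 0 < xim.
Hypothesis mu_ge0 : 0 <= mu.
Hypothesis mu_le_xim : mu <= xim.

Lemma continuity_gap : continuity (gap xim mu).
Proof.
  intros d. unfold gap. apply continuity_pt_plus; apply continuity_pt_scal;
    [apply continuity_pt_minus; apply continuity_log_cosh_energy; nra |].
  apply continuity_kernel_integral, mu_ge0.
Qed.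

Lemma gap_decreasing d1 d2 : 0 < d1 < d2 -> gap xim mu d2 < gap xim mu d1.
Proof.
  intros Hd. unfold gap.
  destruct (log_cosh_energy_sub_decreasing (xim ^ 2) (mu ^ 2) d1 d2) as [Hle Hlt];
    [nra | exact Hd |].
  destruct (Rle_lt_or_eq_dec 0 mu mu_ge0) as [Hmu|<-].
  - pose proof (kernel_integral_decreasing mu d1 d2 Hmu Hd). nra.
  - specialize (Hlt ltac:(nra)). nra.
Qed.

Lemma gap_inj d1 d2 : 0 < d1 -> 0 < d2 -> gap xim mu d1 = gap xim mu d2 -> d1 = d2.
Proof.
  intros H1 H2 Heq. destruct (Rtotal_order d1 d2) as [Hlt|[->|Hgt]]; [| reflexivity |].
  - pose proof (gap_decreasing d1 d2 (conj H1 Hlt)). lra.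
  - pose proof (gap_decreasing d2 d1 (conj H2 Hgt)). lra.
Qed.

Lemma gap_lt_gap0 d : 0 < d -> gap xim mu d < gap xim mu 0.
Proof.
  intros Hd. apply (Rlt_le_trans _ (gap xim mu (d / 2))); [apply gap_decreasing; lra|].
  apply le_of_continuity_pt_right; [lra | apply continuity_gap |].
  intros e He. left. apply gap_decreasing. lra.
Qed.

Lemma gap_eventually_lt y : 0 < y -> exists D, 0 < D /\ gap xim mu D < y.
Proof.
  intros Hy. set (K := xim ^ 2 + mu ^ 2). assert (HK : 0 < K) by (unfold K; nra).
  exists (2 * K / y). assert (HD : 0 < 2 * K / y) by (apply Rdiv_lt_0_compat; lra).
  split; [exact HD|]. unfold gap.
  pose proof (log_cosh_energy_sub_le (xim ^ 2) (mu ^ 2) _ ltac:(nra) HD).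
  pose proof (kernel_integral_le mu _ mu_ge0 HD).
  assert (mu * kernel_integral mu (2 * K / y) <= mu * (mu / (2 * K / y)))
    by (apply Rmult_le_compat_l; assumption).
  replace (xim ^ 2 / (2 * K / y)) with (xim ^ 2 * y / (2 * K)) in * by (field; lra).
  replace (mu * (mu / (2 * K / y))) with (mu ^ 2 * y / (2 * K)) in * by (field; lra).
  assert (xim ^ 2 * y / (2 * K) + mu ^ 2 * y / (2 * K) = y / 2)
    by (unfold K in HK |- *; field; lra).
  lra.
Qed.

End GapFunction.

Lemma Rint_RInt f a b : ex_RInt f a b -> Rint f a b = RInt f a b.
Proof.
  intros Hex. unfold Rint.
  destruct (epsilon_spec (inhabits 0)
              (fun l => exists pr : Riemann_integrable f a b, RiemannInt pr = l))
    as [pr Hpr].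
  - exists (RiemannInt (ex_RInt_Reals_0 f a b Hex)). eexists. reflexivity.
  - rewrite <- Hpr. symmetry. apply RInt_Reals.
Qed.

Lemma gap_eq_gapRHS xim mu T D : 0 < T -> 0 < D -> gap (2 * T) xim mu D = gapRHS xim mu T D.
Proof.
  intros HT HD. unfold gap, gapRHS, log_cosh_energy.
  rewrite ln_div by apply cosh_pos.
  assert (Hk : forall xi, kernel (2 * T) (sqrt (xi ^ 2 + D ^ 2))
                      = tanh (sqrt (xi ^ 2 + D ^ 2) / (2 * T)) / sqrt (xi ^ 2 + D ^ 2)).
  { intros xi. apply kernel_eq; [lra|]. apply Rgt_not_eq, sqrt_lt_R0. nra. }
  rewrite Rint_RInt.
  - unfold kernel_integral. rewrite (RInt_ext _ _ _ _ (fun xi _ => Hk xi)). reflexivity.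
  - apply (ex_RInt_ext _ _ _ _ (fun xi _ => Hk xi)), ex_RInt_kernel_energy.
Qed.

Lemma gap0_eq_gapThreshold xim mu T : 0 < T -> 0 <= mu -> 0 <= xim ->
  gap (2 * T) xim mu 0 = gapThreshold xim mu T.
Proof.
  intros HT Hmu Hxim. unfold gap, gapThreshold, log_cosh_energy.
  rewrite !pow_i, !Rplus_0_r, !sqrt_pow2, ln_div by (lia || lra || apply cosh_pos).
  assert (Hk : forall xi, Rmin 0 mu < xi < Rmax 0 mu ->
            kernel (2 * T) (sqrt (xi ^ 2 + 0 ^ 2)) = tanh (xi / (2 * T)) / xi).
  { intros xi Hxi. rewrite Rmin_left, Rmax_right in Hxi by lra.
    rewrite pow_i, Rplus_0_r, sqrt_pow2 by (lia || lra). apply kernel_eq; lra. }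
  rewrite Rint_RInt.
  - unfold kernel_integral. rewrite (RInt_ext _ _ _ _ Hk). reflexivity.
  - apply (ex_RInt_ext _ _ _ _ Hk), ex_RInt_kernel_energy.
Qed.

Theorem mainTheorem6 (xim lam mu T : R)
  (hxim : 0 < xim) (hlam : 0 < lam) (hmu0 : 0 <= mu) (hmu : mu <= xim)
  (hT : 0 < T) :
  ((exists D : R, 0 < D /\ xim / lam = gapRHS xim mu T D)
     <-> xim / lam < gapThreshold xim mu T)
  /\ (forall D1 D2 : R, 0 < D1 -> 0 < D2 ->
        xim / lam = gapRHS xim mu T D1 ->
        xim / lam = gapRHS xim mu T D2 -> D1 = D2).
Proof.
  assert (Hc : 0 < 2 * T) by lra.
  assert (Hy : 0 < xim / lam) by (apply Rdiv_lt_0_compat; lra).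
  rewrite <- gap0_eq_gapThreshold by lra.
  split; [split|].
  - intros [D [HD ->]]. rewrite <- gap_eq_gapRHS by lra. apply gap_lt_gap0; assumption.
  - intros Hlt.
    destruct (gap_eventually_lt (2 * T) Hc xim mu hxim hmu0 hmu (xim / lam) Hy) as [D [HD HgD]].
    destruct (IVT_gen (gap (2 * T) xim mu) 0 D (xim / lam)) as [x [Hx Hgx]].
    + apply continuity_gap, hmu0.
    + rewrite Rmin_right, Rmax_left; lra.
    + rewrite Rmin_left, Rmax_right in Hx by lra.
      assert (x <> 0) by (intros ->; lra).
      exists x. split; [lra|]. rewrite <- gap_eq_gapRHS by lra. congruence.
  - intros D1 D2 H1 H2 E1 E2. rewrite <- gap_eq_gapRHS in E1, E2 by lra.
    apply (gap_inj (2 * T) Hc xim mu hxim hmu0 hmu); [exact H1 | exact H2 | congruence].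
Qed.
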